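(* Let $m$ be a positive integer, and let $A=\{a_s(n_s)\}_{s=1}^k$ with positive integers $n_s$ and integers $0\leqslant a_s<n_s$. Let $p$ be any prime with $p>|S(n_1,\ldots,n_k)|$. Then $A$ is an exact $m$-cover of $\mathbb Z$ (i.e., $|\{1\leqslant s\leqslant k: x\equiv a_s\pmod{n_s}\}|=m$ for every $x\in\mathbb Z$) if and only if $$\sum_{s=1}^k\frac{e^{2\pi i a_s/p}}{1-e^{2\pi i n_s/p}}=\frac{m}{1-e^{2\pi i/p}}.$$
   Context: For a positive integer $n$ and $a\in\{0,\ldots,n-1\}$, $a(n)$ denotes the residue class $\{x\in\mathbb Z: x\equiv a \pmod n\}$. For positive integers $n_1,\ldots,n_k$, $S(n_1,\ldots,n_k)=\{r/n_s: r=0,\ldots,n_s-1;\ s=1,\ldots,k\}$, a set of rational numbers, and $|S(\cdot)|$ denotes its cardinality. *)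

From mathcomp Require Import all_boot all_order all_algebra.
From mathcomp Require Import complex.
From mathcomp Require Import all_classical all_reals all_analysis.
Set Implicit Arguments. Unset Strict Implicit. Unset Printing Implicit Defensive.
Import Order.TTheory GRing.Theory Num.Theory.
Local Open Scope ring_scope.

Definition exact_m_cover (k : nat) (n a : 'I_k -> nat) (m : nat) : Prop :=
  forall x : int,
    #|[set s : 'I_k | (x == (a s)%:Z %[mod (n s)%:Z])%Z]| = m.

Definition S_set (k : nat) (n : 'I_k -> nat) : seq rat :=
  undup [seq (r%:R / (n s)%:R : rat) | s <- enum 'I_k, r <- iota 0 (n s)].

Definition card_S (k : nat) (n : 'I_k -> nat) : nat := size (S_set n).

Definition unit_exp (R : realType) (p j : nat) : R[i] :=
  let t : R := 2 * pi * j%:R / p%:R in (cos t +i* sin t)%C.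
Arguments unit_exp : clear implicits.

From mathcomp Require Import all_boot all_order all_algebra.
From mathcomp Require Import complex.
From mathcomp Require Import all_classical all_reals all_analysis.
From mathcomp Require Import algC cyclotomic.
From mathcomp Require Import ring zify.
Set Implicit Arguments. Unset Strict Implicit. Unset Printing Implicit Defensive.
Import Order.TTheory GRing.Theory Num.Theory.
Local Open Scope ring_scope.

(* Let L be the product of the n_s and P(X) = sum_(x < L) (#{s | x = a_s mod n_s} - m) X^x,
   a polynomial with integer coefficients; A is an exact m-cover iff P = 0.  Summing
   geometric series, P(z) = (1 - z^L) (sum_s z^a_s / (1 - z^n_s) - m / (1 - z)) whenever
   no z^n_s is 1.  Since n_s <= |S| < p, this applies to zeta = e^(2 pi i / p), and zeta^L
   <> 1, so the identity of the theorem says exactly that P(zeta) = 0.  This gives one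
   direction.  Conversely, 1 + X + ... + X^(p-1) is irreducible over Q, so P(zeta) = 0
   forces P(zeta^j) = 0 for 0 < j < p.  Let h be the product of the X - omega, omega
   ranging over the L-th roots of unity that are n_s-th roots of unity for some s; there
   are at most |S| of them, because e^(2 pi i r / n_s) only depends on r / n_s.  Every
   X^n_s - 1 divides h, hence X^L - 1 divides h P, and the quotient h P / (X^L - 1) has
   degree < |S| <= p - 1 while vanishing at the p - 1 points zeta^j.  So it is 0, and so
   is P. *)

Section UnitExp.
Variable R : realType.

Definition expi (t : R) : R[i] := Complex (cos t) (sin t).

Lemma expiD t u : expi (t + u) = expi t * expi u.
Proof. by apply/eqP; rewrite /expi cosD sinD eq_complex /=; apply/andP; split; apply/eqP; ring. Qed.

Lemma expiMn t j : expi (t *+ j) = expi t ^+ j.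
Proof.
elim: j => [|j IH]; first by rewrite /expi mulr0n cos0 sin0.
by rewrite mulrS expiD IH exprS.
Qed.

Lemma expi_eq1 t : 0 < t < pi *+ 2 -> expi t != 1.
Proof.
case/andP=> t_gt0 t_lt2pi; rewrite /expi eq_complex /= negb_and.
have [t_ltpi|pi_ltt|->] := ltgtP t pi.
- by rewrite orbC gt_eqF // sin_gt0_pi // t_gt0.
- have h : 0 < t - pi < pi by rewrite subr_gt0 pi_ltt ltrBlDr -mulr2n.
  by rewrite orbC -[t](subrK pi) sinDpi oppr_eq0 gt_eqF // sin_gt0_pi.
- by rewrite cospi -subr_eq0 -opprD oppr_eq0 -(natrD _ 1 1) pnatr_eq0.
Qed.

Lemma unit_expE p j : unit_exp R p j = expi (2 * pi / p%:R) ^+ j.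
Proof. by rewrite -expiMn /unit_exp /expi; congr (Complex (cos _) (sin _)); rewrite -mulr_natr; ring. Qed.

Lemma unit_exp_prim p : (0 < p)%N -> p.-primitive_root (unit_exp R p 1).
Proof.
move=> p_gt0; have pR_gt0 : 0 < p%:R :> R by rewrite ltr0n.
have two_pi : 2 * pi = pi *+ 2 :> R by rewrite mulr_natl.
apply/andP; split=> //; apply/forallP=> i; rewrite unity_rootE unit_expE expr1 -expiMn.
have [->|i1_neq_p] := eqVneq i.+1 p; apply/eqP.
  have -> : 2 * pi / p%:R *+ p = pi *+ 2 :> R by rewrite -mulr_natr divfK ?gt_eqF.
  by rewrite /expi cos2pi sin2pi eqxx.
apply/negbTE/expi_eq1; rewrite -(mulr_natr (2 * pi / p%:R)) mulrAC.
rewrite divr_gt0 ?mulr_gt0 ?ltr0n ?pi_gt0 //=.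
rewrite ltr_pdivrMr // -two_pi ltr_pM2l ?mulr_gt0 ?pi_gt0 // ltr_nat.
by have := ltn_ord i; lia.
Qed.

End UnitExp.

Definition cover_count k (n a : 'I_k -> nat) (x : nat) : nat :=
  #|[set s : 'I_k | (x %% n s == a s)%N]|.

Lemma exact_m_coverE k (n a : 'I_k -> nat) m L :
  (forall s, a s < n s)%N -> (0 < L)%N -> (forall s, n s %| L)%N ->
  exact_m_cover n a m <-> (forall x, (x < L)%N -> cover_count n a x = m).
Proof.
move=> a_lt_n L_gt0 n_dvd_L.
have countE (x : nat) : cover_count n a x = #|[set s | (x%:Z == (a s)%:Z %[mod (n s)%:Z])%Z]|.
  by apply: eq_card => s; rewrite !inE !modz_nat (modn_small (a_lt_n s)).
split=> [cover x _|cover x]; first by rewrite countE.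
set y := (x %% L%:Z)%Z.
have y_ge0 : 0 <= y by rewrite modz_ge0 // lt0n_neq0.
have yE : y = `|y|%N by rewrite gez0_abs.
have y_modn s : (x == (a s)%:Z %[mod (n s)%:Z])%Z = (y == (a s)%:Z %[mod (n s)%:Z])%Z.
  rewrite /y; have [c ->] := dvdnP (n_dvd_L s).
  by rewrite {1}(divz_eq x (c * n s)%N) PoszM mulrA modzMDl.
rewrite -(cover `|y|%N); last by rewrite -ltz_nat -yE ltz_pmod.
by rewrite countE; apply: eq_card => s; rewrite !inE y_modn -yE.
Qed.

Section Lacunary.
Variable R : nzRingType.

Definition lacunary (d q : nat) : {poly R} := \sum_(t < q) 'X^(d * t).

Lemma mul_lacunary d q : ('X^d - 1) * lacunary d q = 'X^(d * q) - 1.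
Proof.
by rewrite exprM [RHS]subrX1; congr (_ * _); apply: eq_bigr => t _; rewrite exprM.
Qed.

Lemma lacunary_mod d b q : (b < d)%N ->
  \sum_(x < d * q) ((x %% d == b)%N)%:R *: 'X^x = 'X^b * lacunary d q.
Proof.
move=> b_lt_d; elim: q => [|q IH]; first by rewrite muln0 /lacunary !big_ord0 mulr0.
have mod_dq i : ((d * q + i) %% d = i %% d)%N by rewrite mulnC modnMDl.
rewrite mulnSr big_split_ord /= IH /lacunary big_ord_recr /= mulrDr; congr (_ + _).
rewrite (bigD1 (Ordinal b_lt_d)) //= big1 => [|i /=].
  by rewrite mod_dq modn_small // eqxx scale1r addr0 addnC exprD.
by rewrite -val_eqE /= mod_dq modn_small // => /negbTE ->; rewrite scale0r.
Qed.

Lemma size_lacunary1 q : size (lacunary 1 q) = q.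
Proof.
have -> : lacunary 1 q = \poly_(i < q) 1.
  by rewrite poly_def; apply: eq_bigr => i _; rewrite mul1n scale1r.
by rewrite size_poly_eq // oner_neq0.
Qed.

End Lacunary.

Lemma map_lacunary (R S : nzRingType) (f : {rmorphism R -> S}) d q :
  map_poly f (lacunary R d q) = lacunary S d q.
Proof. by rewrite rmorph_sum; apply: eq_bigr => t _; rewrite rmorphXn /= map_polyX. Qed.

Lemma horner_lacunary (F : fieldType) (z : F) d q : z ^+ d != 1 ->
  (lacunary F d q).[z] = (1 - z ^+ (d * q)) / (1 - z ^+ d).
Proof.
move=> zd_neq1; have zd_sub : z ^+ d - 1 != 0 by rewrite subr_eq0.
have := congr1 (horner^~ z) (mul_lacunary F d q); rewrite hornerM !hornerE => E.
by apply: (mulfI zd_sub); rewrite E; field; rewrite -opprB oppr_eq0.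
Qed.

Lemma root_lacunary1 (F : fieldType) q (z : F) : z != 1 ->
  root (lacunary F 1 q) z = (z ^+ q == 1).
Proof.
move=> z_neq1; have z_sub : (1 - z == 0) = false by rewrite subr_eq0 eq_sym (negPf z_neq1).
rewrite /root horner_lacunary expr1 // mul1n mulf_eq0 invr_eq0 z_sub orbF.
by rewrite subr_eq0 eq_sym.
Qed.

Lemma lacunary_horner1 (R : comNzRingType) d q : (lacunary R d q).[1] = q%:R.
Proof.
rewrite /lacunary horner_sum; under eq_bigr do rewrite hornerXn expr1n.
by rewrite sumr_const card_ord.
Qed.

Lemma dvdp_Xn_sub1M (F : fieldType) d q : ('X^d - 1 : {poly F}) %| 'X^(d * q) - 1.
Proof. by rewrite -mul_lacunary dvdp_mulr. Qed.

Definition cover_poly (R : nzRingType) k (n a : 'I_k -> nat) (m L : nat) : {poly R} :=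
  \poly_(x < L) ((cover_count n a x)%:R - m%:R).
Arguments cover_poly {R k}.

Section CoverPoly.
Variables (k : nat) (n a : 'I_k -> nat) (m L : nat).

Lemma map_cover_poly (R S : nzRingType) (f : {rmorphism R -> S}) :
  map_poly f (cover_poly n a m L) = cover_poly n a m L.
Proof.
apply/polyP=> x; rewrite coef_map_id0 ?rmorph0 // !coef_poly.
by case: ifP => _; rewrite ?rmorph0 // rmorphB !rmorph_nat.
Qed.

Lemma cover_poly_eq0 (R : numDomainType) :
  cover_poly n a m L = 0 :> {poly R} <-> (forall x, (x < L)%N -> cover_count n a x = m).
Proof.
split=> [P0 x x_lt_L|count_m].
  have /eqP := congr1 (fun P : {poly R} => P`_x) P0.
  by rewrite coef_poly x_lt_L coef0 subr_eq0 eqr_nat => /eqP.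
by apply/polyP=> x; rewrite coef_poly coef0; case: ifP => // /count_m ->; rewrite subrr.
Qed.

Hypotheses (a_lt_n : forall s, (a s < n s)%N) (n_dvd_L : forall s, (n s %| L)%N).

Lemma cover_polyE (R : comNzRingType) :
  cover_poly n a m L =
    \sum_(s < k) 'X^(a s) * lacunary R (n s) (L %/ n s) - m%:R *: lacunary R 1 L.
Proof.
rewrite /cover_poly poly_def; under eq_bigr do rewrite scalerBl.
rewrite sumrB /lacunary scaler_sumr; congr (_ - _); last first.
  by apply: eq_bigr => x _; rewrite mul1n.
have countE x : (cover_count n a x)%:R = \sum_(s < k) ((x %% n s == a s)%N)%:R :> R.
  rewrite /cover_count -sum1_card natr_sum big_mkcond /=.
  by apply: eq_bigr => s _; rewrite inE; case: eqP.
under eq_bigr do rewrite countE scaler_suml.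
rewrite exchange_big /=; apply: eq_bigr => s _.
by rewrite -lacunary_mod // mulnC divnK.
Qed.

Lemma horner_cover_poly (F : fieldType) (z : F) :
  z != 1 -> (forall s, z ^+ n s != 1) ->
  (cover_poly n a m L).[z] =
    (1 - z ^+ L) * (\sum_(s < k) z ^+ a s / (1 - z ^+ n s) - m%:R / (1 - z)).
Proof.
move=> z_neq1 zn_neq1; have z_sub : 1 - z != 0 by rewrite subr_eq0 eq_sym.
rewrite cover_polyE hornerD hornerN hornerZ horner_sum horner_lacunary ?expr1 //.
rewrite mul1n mulrBr mulr_sumr; congr (_ + - _); last by rewrite mulrCA.
apply: eq_bigr => s _; rewrite hornerM hornerXn horner_lacunary // mulnC divnK //.
by rewrite mulrCA mulrA.
Qed.

Lemma root_cover_poly (F : fieldType) (z : F) :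
  z != 1 -> (forall s, z ^+ n s != 1) -> z ^+ L != 1 ->
  root (cover_poly n a m L) z =
    (\sum_(s < k) z ^+ a s / (1 - z ^+ n s) == m%:R / (1 - z)).
Proof.
move=> z_neq1 zn_neq1 zL_neq1; have zL_sub : 1 - z ^+ L != 0 by rewrite subr_eq0 eq_sym.
by rewrite /root horner_cover_poly // mulf_eq0 (negPf zL_sub) subr_eq0.
Qed.

End CoverPoly.

Lemma size_undup_map_le (T U V : eqType) (f : T -> U) (g : T -> V) (l : seq T) :
  {in l &, forall x y, f x = f y -> g x = g y} ->
  (size (undup (map g l)) <= size (undup (map f l)))%N.
Proof.
elim: l => [//|x l IH] fg /=.
have IHl : (size (undup (map g l)) <= size (undup (map f l)))%N.
  by apply: IH => u v ul vl; apply: fg; rewrite inE ?ul ?vl orbT.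
case: ifP => gx; case: ifP => fx //=; try exact: leqW.
move/negbT: gx => /negP; case; case/mapP: fx => y yl fy.
by apply/mapP; exists y => //; apply: fg; rewrite ?inE ?yl ?eqxx ?orbT.
Qed.

Section CardS.
Variables (k : nat) (n : 'I_k -> nat).
Hypothesis n_gt0 : forall s, (0 < n s)%N.

Lemma n_le_card_S s : (n s <= card_S n)%N.
Proof.
rewrite -[n s](size_iota 0) -(size_map (fun r => r%:R / (n s)%:R : rat)).
apply: uniq_leq_size.
  rewrite map_inj_in_uniq ?iota_uniq // => r r' _ _ /eqP.
  by rewrite eqr_div ?pnatr_eq0 -?lt0n // -!natrM eqr_nat eqn_pmul2r // => /eqP.
move=> x /mapP[r r_in ->]; rewrite mem_undup.
by apply: (allpairs_f_dep (fun s r => r%:R / (n s)%:R : rat)); rewrite ?mem_enum.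
Qed.

Lemma size_undup_fractions_le (T : eqType) (g : 'I_k -> nat -> T) :
  (forall s s' r r', (r * n s' = r' * n s)%N -> g s r = g s' r') ->
  (size (undup [seq g s r | s <- enum 'I_k, r <- iota 0 (n s)]) <= card_S n)%N.
Proof.
move=> g_frac; rewrite /card_S /S_set.
set pairs := [seq (s, r) | s <- enum 'I_k, r <- iota 0 (n s)].
have pairsE (U : Type) (h : 'I_k -> nat -> U) :
    [seq h s r | s <- enum 'I_k, r <- iota 0 (n s)] = map (fun x => h x.1 x.2) pairs.
  by rewrite map_allpairs.
rewrite !pairsE; apply: size_undup_map_le => -[s r] [s' r'] _ _ /= /eqP.
by rewrite eqr_div ?pnatr_eq0 -?lt0n // -!natrM eqr_nat => /eqP; apply: g_frac.
Qed.

End CardS.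

Lemma eq0_of_Xn_sub1_dvdp (F : fieldType) (h P : {poly F}) L (zs : seq F) :
  (0 < L)%N -> h != 0 -> 'X^L - 1 %| h * P -> (size P <= L)%N ->
  (size h <= (size zs).+1)%N -> uniq zs -> all (root P) zs ->
  all (fun z => z ^+ L != 1) zs -> P = 0.
Proof.
move=> L_gt0 h_neq0 XL_dvd P_size h_size zs_uniq P_roots zs_off.
apply/eqP; apply: contraT => P_neq0.
have XL_neq0 : 'X^L - 1 != 0 :> {poly F} by rewrite -size_poly_eq0 size_XnsubC.
set G := h * P %/ ('X^L - 1).
have hPE : h * P = G * ('X^L - 1) by rewrite divpK.
have G_neq0 : G != 0.
  apply: contraNneq P_neq0 => G0; move/eqP: hPE.
  by rewrite G0 mul0r mulf_eq0 (negPf h_neq0).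
have G_roots : all (root G) zs.
  apply/allP=> z z_in; have /rootP Pz := allP P_roots z z_in.
  have := congr1 (horner^~ z) hPE; rewrite !hornerM Pz mulr0 !hornerE => /esym/eqP.
  by rewrite mulf_eq0 subr_eq0 (negPf (allP zs_off z z_in)) orbF.
have zs_lt := max_poly_roots G_neq0 G_roots zs_uniq.
have := size_mul h_neq0 P_neq0; rewrite hPE size_mul // size_XnsubC //.
move: zs_lt P_size h_size; rewrite -!subn1.
(* Naming the sizes identifies their differently elaborated copies for lia. *)
set sG := size G; set sh := size h; set sP := size P; set sz := size zs; lia.
Qed.

Section CommonRoots.
Variables (F : fieldType) (k : nat) (n : 'I_k -> nat) (L : nat) (w : F).
Hypotheses (n_gt0 : forall s, (0 < n s)%N) (n_dvd_L : forall s, (n s %| L)%N).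
Hypothesis w_prim : L.-primitive_root w.

Definition common_roots : seq F :=
  undup [seq w ^+ (L %/ n s * r) | s <- enum 'I_k, r <- iota 0 (n s)].

Definition common_roots_poly : {poly F} := \prod_(z <- common_roots) ('X - z%:P).

Lemma size_common_roots : (size common_roots <= card_S n)%N.
Proof.
apply: size_undup_fractions_le => // s s' r r' frac_eq; congr (w ^+ _).
have nn_gt0 : (0 < n s * n s')%N by rewrite muln_gt0 !n_gt0.
apply/eqP; rewrite -(eqn_pmul2r nn_gt0); apply/eqP.
have := divnK (n_dvd_L s); have := divnK (n_dvd_L s'); nia.
Qed.

Lemma Xn_sub1_dvd_common_roots_poly s : 'X^(n s) - 1 %| common_roots_poly.
Proof.
set xi := w ^+ (L %/ n s); have prim : (n s).-primitive_root xi by apply: dvdn_prim_root.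
rewrite -(factor_Xn_sub_1 prim).
have -> : \prod_(0 <= i < n s) ('X - (xi ^+ i)%:P) =
    \prod_(z <- [seq xi ^+ i | i <- index_iota 0 (n s)]) ('X - z%:P) by rewrite big_map.
apply: uniq_roots_dvdp; last first.
  rewrite uniq_rootsE map_inj_in_uniq ?iota_uniq // => i j.
  rewrite !mem_iota !add0n subn0 => i_lt j_lt /eqP.
  by rewrite (eq_prim_root_expr prim) !modn_small // => /eqP.
apply/allP=> _ /mapP[r r_in ->]; rewrite root_prod_XsubC mem_undup -exprM.
rewrite mem_iota add0n subn0 in r_in.
by apply: (allpairs_f_dep (fun s r => w ^+ (L %/ n s * r))); rewrite ?mem_enum ?mem_iota.
Qed.

End CommonRoots.

Lemma Xn_sub1_dvd_common_roots_mul (F : fieldType) k (n a : 'I_k -> nat) m L (w : F)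
    (s0 : 'I_k) :
  (forall s, 0 < n s)%N -> (forall s, a s < n s)%N -> (forall s, n s %| L)%N ->
  L.-primitive_root w -> 'X^L - 1 %| common_roots_poly n L w * cover_poly n a m L.
Proof.
move=> n_gt0 a_lt_n n_dvd_L w_prim; set h := common_roots_poly n L w.
have h_dvd s : 'X^(n s) - 1 %| h by apply: Xn_sub1_dvd_common_roots_poly.
have XL_dvd d : (d %| L)%N -> 'X^d - 1 %| h -> 'X^L - 1 %| h * lacunary F d (L %/ d).
  move=> d_dvd_L Xd_dvd; rewrite -{1}(divnK d_dvd_L) mulnC -mul_lacunary.
  by rewrite dvdp_mul ?dvdpp.
rewrite cover_polyE // mulrBr mulr_sumr; apply: dvdp_sub.
  apply: (big_ind (fun P => 'X^L - 1 %| P)) => [|P Q|s _]; [exact: dvdp0 | exact: dvdp_add |].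
  by rewrite mulrCA dvdp_mull ?XL_dvd.
rewrite -scalerAr -mul_polyC dvdp_mull // -[X in lacunary _ _ X]divn1 XL_dvd //.
by apply: dvdp_trans (h_dvd s0); rewrite -[n s0]mul1n dvdp_Xn_sub1M.
Qed.

Section PrimeCyclotomic.
Variable p : nat.
Hypothesis p_prime : prime p.

Lemma prime_prim_root (F : idomainType) (z : F) : z ^+ p = 1 -> z != 1 -> p.-primitive_root z.
Proof.
move=> zp z_neq1; have [d d_prim d_dvd_p] := prim_order_exists (prime_gt0 p_prime) zp.
case/primeP: p_prime => _ /(_ d d_dvd_p) /orP[/eqP d1|/eqP <- //].
by move: d_prim; rewrite d1 => /prim_expr_order; rewrite expr1 => /eqP; rewrite (negPf z_neq1).
Qed.

Lemma lacunary1_neq0 (R : nzRingType) : lacunary R 1 p != 0.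
Proof. by rewrite -size_poly_eq0 size_lacunary1 -lt0n prime_gt0. Qed.

Lemma irreducible_lacunary1 : irreducible_poly (lacunary rat 1 p).
Proof.
split=> [|d d_size d_dvd]; first by rewrite size_lacunary1 prime_gt1.
have d_neq0 : d != 0 := dvdpN0 d_dvd (lacunary1_neq0 _).
have [w w_root] : exists w, root (map_poly ratr d : {poly algC}) w.
  by apply/closed_rootP; rewrite size_map_poly.
have w_Phi : root (lacunary algC 1 p) w.
  by rewrite -(map_lacunary ratr); apply: root_dvdp w_root; rewrite dvdp_map.
have w_neq1 : w != 1.
  by apply: contraTneq w_Phi => ->; rewrite /root lacunary_horner1 pnatr_eq0 -lt0n prime_gt0.
have w_prim : p.-primitive_root w.
  by apply: prime_prim_root => //; apply/eqP; rewrite -root_lacunary1.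
have [pf [pfE _] pf_dvd] := minCpolyP w.
have pf_size : size pf = p.
  have <- : size (minCpoly w) = size pf by rewrite pfE size_map_poly.
  by rewrite (minCpoly_cyclotomic w_prim) size_cyclotomic totient_prime // prednK ?prime_gt0.
rewrite -dvdp_size_eqp // eqn_leq dvdp_leq ?lacunary1_neq0 //= size_lacunary1.
by rewrite -pf_size dvdp_leq // -pf_dvd.
Qed.
Lemma lacunary1_dvdp (K : numFieldType) (z : K) (q : {poly rat}) :
  p.-primitive_root z -> root (map_poly ratr q) z -> lacunary rat 1 p %| q.
Proof.
move=> z_prim q_root.
have z_neq1 : z != 1 by rewrite -[z]expr1 -(prim_order_dvd z_prim) gtnNdvd ?prime_gt1.
have Phi_root : root (map_poly ratr (lacunary rat 1 p)) z.
  by rewrite map_lacunary root_lacunary1 // prim_expr_order.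
set d := gcdp q (lacunary rat 1 p).
have d_root : root (map_poly ratr d) z by rewrite gcdp_map root_gcd q_root.
have d_neq0 : d != 0 by rewrite gcdp_eq0 negb_and lacunary1_neq0 orbT.
have d_size : size d != 1.
  have : (1 < size (map_poly ratr d : {poly K}))%N.
    by apply: (root_size_gt1 (a := z)); rewrite ?map_poly_eq0.
  by rewrite size_map_poly => /gtn_eqF ->.
have /eqp_dvdl <- := irreducible_lacunary1.2 d d_size (dvdp_gcdr _ _).
exact: dvdp_gcdl.
Qed.

Lemma root_exp_coprime (K : numFieldType) (z : K) (q : {poly rat}) j :
  p.-primitive_root z -> coprime j p ->
  root (map_poly ratr q) z -> root (map_poly ratr q) (z ^+ j).
Proof.
move=> z_prim j_coprime q_root.
have zj_prim : p.-primitive_root (z ^+ j) by rewrite prim_root_exp_coprime.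
have zj_neq1 : z ^+ j != 1.
  by rewrite -[z ^+ j]expr1 -(prim_order_dvd zj_prim) gtnNdvd ?prime_gt1.
apply: (root_dvdp (p := map_poly ratr (lacunary rat 1 p))).
  by rewrite dvdp_map (lacunary1_dvdp z_prim q_root).
by rewrite map_lacunary root_lacunary1 // prim_expr_order.
Qed.

End PrimeCyclotomic.

Lemma cover_poly_eq0_of_root (K : numFieldType) k (n a : 'I_k -> nat) m L p
    (zeta w : K) (s0 : 'I_k) :
  (forall s, 0 < n s)%N -> (forall s, a s < n s)%N -> (forall s, n s %| L)%N ->
  prime p -> ~~ (p %| L)%N -> (card_S n < p)%N ->
  p.-primitive_root zeta -> L.-primitive_root w ->
  root (cover_poly n a m L) zeta -> cover_poly n a m L = 0 :> {poly K}.
Proof.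
move=> n_gt0 a_lt_n n_dvd_L p_prime p_ndvd_L S_lt_p zeta_prim w_prim P_root.
have L_gt0 := prim_order_gt0 w_prim.
have j_range j : j \in iota 1 p.-1 -> (0 < j < p)%N.
  by rewrite mem_iota; have := prime_gt1 p_prime; lia.
apply: (eq0_of_Xn_sub1_dvdp (h := common_roots_poly n L w)
          (zs := [seq zeta ^+ j | j <- iota 1 p.-1]) L_gt0).
- by rewrite monic_neq0 ?monic_prod_XsubC.
- exact: (Xn_sub1_dvd_common_roots_mul m s0).
- exact: size_poly.
- rewrite size_prod_XsubC size_map size_iota prednK ?prime_gt0 //.
  exact: leq_ltn_trans (size_common_roots _ _ _) S_lt_p.
- rewrite map_inj_in_uniq ?iota_uniq // => i j /j_range/andP[_ i_lt] /j_range/andP[_ j_lt].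
  by move/eqP; rewrite (eq_prim_root_expr zeta_prim) !modn_small // => /eqP.
- apply/allP=> _ /mapP[j /j_range j_lt ->].
  rewrite -(map_cover_poly n a m L ratr); apply: root_exp_coprime zeta_prim _ _ => //.
    by rewrite coprime_sym prime_coprime // gtnNdvd //; lia.
  by rewrite map_cover_poly.
- apply/allP=> _ /mapP[j /j_range j_lt ->] /=.
  by rewrite -exprM -(prim_order_dvd zeta_prim) Euclid_dvdM // negb_or p_ndvd_L gtnNdvd //; lia.
Qed.

Theorem corollary1p1 (R : realType) (m k : nat) (n a : 'I_k -> nat) (p : nat) :
  (0 < m)%N ->
  (forall s, 0 < n s)%N ->
  (forall s, a s < n s)%N ->
  prime p ->
  (card_S n < p)%N ->
  (exact_m_cover n a m <->
   \sum_(s < k) unit_exp R p (a s) / (1 - unit_exp R p (n s))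
     = m%:R / (1 - unit_exp R p 1)).
Proof.
move=> m_gt0 n_gt0 a_lt_n p_prime S_lt_p.
set zeta := unit_exp R p 1.
have zetaE j : unit_exp R p j = zeta ^+ j by rewrite /zeta !unit_expE expr1.
under eq_bigr do rewrite !zetaE.
have zeta_prim : p.-primitive_root zeta := unit_exp_prim R (prime_gt0 p_prime).
have zeta_neq1 : zeta != 1.
  by rewrite -[zeta]expr1 -(prim_order_dvd zeta_prim) gtnNdvd ?prime_gt1.
have zeta_pow_neq1 j : ~~ (p %| j)%N -> zeta ^+ j != 1 by rewrite -(prim_order_dvd zeta_prim).
have n_lt_p s : (n s < p)%N := leq_ltn_trans (n_le_card_S n_gt0 s) S_lt_p.
set L := (\prod_(s < k) n s)%N.
have L_gt0 : (0 < L)%N by apply: prodn_gt0.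
have n_dvd_L s : (n s %| L)%N by rewrite /L (bigD1 s) //= dvdn_mulr.
have p_ndvd_L : ~~ (p %| L)%N.
  by rewrite Euclid_dvd_prod // big_has; apply/hasPn => s _; rewrite gtnNdvd.
have rootE : root (cover_poly n a m L) zeta =
    (\sum_(s < k) zeta ^+ a s / (1 - zeta ^+ n s) == m%:R / (1 - zeta)).
  by rewrite root_cover_poly // ?zeta_pow_neq1 // => s; rewrite zeta_pow_neq1 ?gtnNdvd.
rewrite (exact_m_coverE _ a_lt_n L_gt0 n_dvd_L) -(cover_poly_eq0 n a m L R[i]).
split=> [P0|zeta_root]; first by apply/eqP; rewrite -rootE P0 root0.
have [k0|k_gt0] := posnP k.
  move: zeta_root; rewrite big1 => [/esym/eqP|s _]; last by exfalso; have := ltn_ord s; lia.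
  rewrite mulf_eq0 invr_eq0 pnatr_eq0 subr_eq0 [1 == _]eq_sym (negPf zeta_neq1) orbF.
  by rewrite eqn0Ngt m_gt0.
apply: (cover_poly_eq0_of_root (Ordinal k_gt0) n_gt0 a_lt_n n_dvd_L p_prime p_ndvd_L S_lt_p
          zeta_prim (unit_exp_prim R L_gt0)).
by rewrite rootE zeta_root eqxx.
Qed.
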